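(* Let $N\ge 1$, $a\in\mathbb{R}^N$ with all $a_i\neq 0$, $\underline x<\overline x$, $\underline y<\overline y$ in $\mathbb{R}^N$, and $\mathcal{S}_a=\{(x,y)\in\mathbb{R}^N\times\mathbb{R}^N: \sum_{i=1}^N a_ix_iy_i=0,\ \underline x\le x\le\overline x,\ \underline y\le y\le\overline y\}$. Then every extreme point $(x,y)$ of $\mathcal{S}_a$ belongs to one of the sets $D_0,D_1,\dots,D_N$, where $D_0=\{(x,y)\in\mathcal{S}_a:\ x_i\in\{\underline x_i,\overline x_i\},\ y_i\in\{\underline y_i,\overline y_i\}\ \forall i\}$ and, for $k=1,\dots,N$, $D_k=\{(x,y)\in\mathcal{S}_a:\ x_i\in\{\underline x_i,\overline x_i\},\ y_i\in\{\underline y_i,\overline y_i\}\ \forall i\neq k,\ x_ky_k=-\tfrac{1}{a_k}\sum_{i\neq k}a_ix_iy_i\}$. Equivalently, there is at most one index $k$ such that $(x_k,y_k)$ is not a vertex of $[\underline x_k,\overline x_k]\times[\underline y_k,\overline y_k]$. *)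

From HB Require Import structures.
From mathcomp Require Import all_boot all_order all_algebra.
Set Implicit Arguments. Unset Strict Implicit. Unset Printing Implicit Defensive.
Import Order.TTheory GRing.Theory Num.Theory.
Local Open Scope ring_scope.

Definition pt (R : realFieldType) (N : nat) := (('I_N -> R) * ('I_N -> R))%type.

Definition pt_eq (R : realFieldType) (N : nat) (p q : pt R N) : Prop :=
  forall i, p.1 i = q.1 i /\ p.2 i = q.2 i.

Definition comb (R : realFieldType) (N : nat) (t : R) (u v : pt R N) : pt R N :=
  (fun i => t * u.1 i + (1 - t) * v.1 i, fun i => t * u.2 i + (1 - t) * v.2 i).

Definition extreme_point (R : realFieldType) (N : nat) (S : pt R N -> Prop)
  (p : pt R N) : Prop :=
  S p /\ forall (u v : pt R N) (t : R), S u -> S v -> 0 < t < 1 ->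
     pt_eq p (comb t u v) -> pt_eq u v.

Definition Sa (R : realFieldType) (N : nat) (a xl xu yl yu : 'I_N -> R)
  (p : pt R N) : Prop :=
  \sum_(i < N) a i * p.1 i * p.2 i = 0 /\
  forall i, (xl i <= p.1 i <= xu i) /\ (yl i <= p.2 i <= yu i).

Definition at_vertex (R : realFieldType) (N : nat) (xl xu yl yu : 'I_N -> R)
  (p : pt R N) (i : 'I_N) : Prop :=
  (p.1 i = xl i \/ p.1 i = xu i) /\ (p.2 i = yl i \/ p.2 i = yu i).

Definition D0 (R : realFieldType) (N : nat) (a xl xu yl yu : 'I_N -> R)
  (p : pt R N) : Prop :=
  Sa a xl xu yl yu p /\ forall i, at_vertex xl xu yl yu p i.

Definition Dk (R : realFieldType) (N : nat) (a xl xu yl yu : 'I_N -> R)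
  (k : 'I_N) (p : pt R N) : Prop :=
  Sa a xl xu yl yu p /\ (forall i, i != k -> at_vertex xl xu yl yu p i) /\
  p.1 k * p.2 k = - (a k)^-1 * \sum_(i < N | i != k) a i * p.1 i * p.2 i.

(* If two indices j <> k are both off the vertices of their boxes, then one
   coordinate of each, say z_j and z_k, lies strictly inside its interval.
   Moving only z_j and z_k makes the bilinear constraint linear in the move,
   so some small nonzero (e_j, e_k) keeps the constraint; p is then the
   midpoint of p + e and p - e, both in S_a, contradicting extremality.
   When only one index k is off the vertices, the constraint solved for
   x_k y_k is the defining equation of D_k. *)
From HB Require Import structures.
From mathcomp Require Import all_boot all_order all_algebra.
From mathcomp Require Import ring lra.
Set Implicit Arguments. Unset Strict Implicit. Unset Printing Implicit Defensive.
Import Order.TTheory GRing.Theory Num.Theory.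
Local Open Scope ring_scope.

Lemma interval_shift_slack (R : realFieldType) (lo x hi d : R) :
  lo <= x <= hi -> `|d| <= Num.min (x - lo) (hi - x) ->
  (lo <= x + d <= hi) /\ (lo <= x - d <= hi).
Proof.
move=> /andP[h1 h2]; rewrite le_min !ler_norml => /andP[/andP[h3 h4] /andP[h5 h6]].
by split; apply/andP; split; lra.
Qed.

Lemma small_nonzero_solution (R : realFieldType) (cj ck mj mk : R) :
  0 < mj -> 0 < mk -> exists ej ek,
  [/\ `|ej| <= mj, `|ek| <= mk, cj * ej + ck * ek = 0 & ej != 0 \/ ek != 0].
Proof.
move=> mj_gt0 mk_gt0; have [->|cj0] := eqVneq cj 0.
  exists mj, 0; rewrite normr0 gtr0_norm // mul0r mulr0 addr0.
  by split; [exact: lexx | exact: ltW | | left; exact: lt0r_neq0].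
have [->|ck0] := eqVneq ck 0.
  exists 0, mk; rewrite normr0 gtr0_norm // mul0r mulr0 addr0.
  by split; [exact: ltW | exact: lexx | | right; exact: lt0r_neq0].
have cj_gt0 : 0 < `|cj| by rewrite normr_gt0.
have ck_gt0 : 0 < `|ck| by rewrite normr_gt0.
pose s := Num.min (mj / `|ck|) (mk / `|cj|).
have s_gt0 : 0 < s by rewrite lt_min !divr_gt0.
exists (s * ck), (- (s * cj)); rewrite normrN !normrM (gtr0_norm s_gt0).
split; last by left; rewrite mulf_neq0 // lt0r_neq0.
- by rewrite -ler_pdivlMr // ge_min lexx.
- by rewrite -ler_pdivlMr // ge_min lexx orbT.
- ring.
Qed.

Section Perturbation.
Variables (R : realFieldType) (N : nat).

Definition shift (p e : pt R N) : pt R N :=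
  (fun i => p.1 i + e.1 i, fun i => p.2 i + e.2 i).

Definition opp_pt (e : pt R N) : pt R N := (fun i => - e.1 i, fun i => - e.2 i).

Lemma extreme_point_shift (S : pt R N -> Prop) (p e : pt R N) :
  extreme_point S p -> S (shift p e) -> S (shift p (opp_pt e)) ->
  forall i, e.1 i = 0 /\ e.2 i = 0.
Proof.
case=> _ hext Spe Sme i.
have half_in : 0 < (2^-1 : R) < 1 by apply/andP; split; lra.
have mid : pt_eq p (comb 2^-1 (shift p e) (shift p (opp_pt e))).
  by move=> l; rewrite /comb /=; split; field; rewrite ?pnatr_eq0.
by have [] := hext _ _ _ Spe Sme half_in mid i; rewrite /= => h1 h2; split; lra.
Qed.

End Perturbation.

Section ExtremePointsOfSa.
Variables (R : realFieldType) (N : nat) (a xl xu yl yu : 'I_N -> R).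

Local Notation S := (Sa a xl xu yl yu).

Definition in_box (q : pt R N) : Prop :=
  forall i, (xl i <= q.1 i <= xu i) /\ (yl i <= q.2 i <= yu i).

Definition constraint_diff (p e : pt R N) : R :=
  \sum_(i < N) a i * (e.1 i * p.2 i + p.1 i * e.2 i).

Definition slack_x (p : pt R N) (i : 'I_N) : R := Num.min (p.1 i - xl i) (xu i - p.1 i).
Definition slack_y (p : pt R N) (i : 'I_N) : R := Num.min (p.2 i - yl i) (yu i - p.2 i).

Lemma constraint_diff_opp (p e : pt R N) :
  constraint_diff p (opp_pt e) = - constraint_diff p e.
Proof.
rewrite /constraint_diff -sumrN; apply: eq_bigr => i _ /=; ring.
Qed.

Lemma constraint_diff_shift (p e f : pt R N) :
  constraint_diff p (shift e f) = constraint_diff p e + constraint_diff p f.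
Proof.
rewrite /constraint_diff -big_split; apply: eq_bigr => i _ /=; ring.
Qed.

(* By bilinearity the constraint at p + e is its value at p, plus the
   differential, plus the vanishing terms a_i e_{1,i} e_{2,i}. *)
Lemma Sa_shift (p e : pt R N) : S p -> (forall i, e.1 i * e.2 i = 0) ->
  constraint_diff p e = 0 -> in_box (shift p e) -> S (shift p e).
Proof.
case=> hS _ he0 hdiff hbox; split=> //=.
transitivity (\sum_(i < N) a i * p.1 i * p.2 i + constraint_diff p e); last first.
  by rewrite hS hdiff addr0.
rewrite /constraint_diff -big_split; apply: eq_bigr => i _ /=.
apply/eqP; rewrite -subr_eq0 -(mulr0 (a i)) -(he0 i); apply/eqP; ring.
Qed.

Lemma extreme_Sa_axis_shift (p e : pt R N) : extreme_point S p ->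
  (forall i, [/\ e.1 i * e.2 i = 0, `|e.1 i| <= slack_x p i & `|e.2 i| <= slack_y p i]) ->
  constraint_diff p e = 0 -> forall i, e.1 i = 0 /\ e.2 i = 0.
Proof.
move=> hext he hdiff; have [hSp _] := hext; have [_ hbox] := hSp.
have he0 i : e.1 i * e.2 i = 0 by have [] := he i.
have in_box_pm : in_box (shift p e) /\ in_box (shift p (opp_pt e)).
  split=> i; have [hx hy] := hbox i; have [_ ex ey] := he i;
    have [hx1 hx2] := interval_shift_slack hx ex;
    have [hy1 hy2] := interval_shift_slack hy ey; by split.
have [bp bm] := in_box_pm.
apply: (extreme_point_shift hext); apply: Sa_shift => //.
- by move=> i /=; rewrite mulrNN.
- by rewrite constraint_diff_opp hdiff oppr0.
Qed.

Definition slack (p : pt R N) (i : 'I_N) (b : bool) : R :=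
  if b then slack_x p i else slack_y p i.

Definition coord_move (i : 'I_N) (b : bool) (s : R) : pt R N :=
  (fun l => if b && (l == i) then s else 0,
   fun l => if ~~ b && (l == i) then s else 0).

Lemma constraint_diff_coord_move (p : pt R N) i b s :
  constraint_diff p (coord_move i b s) = a i * (if b then p.2 i else p.1 i) * s.
Proof.
rewrite /constraint_diff (bigD1 i) //= big1 => [|l /negbTE li]; last first.
  by rewrite li !andbF mul0r mulr0 addr0 mulr0.
by rewrite eqxx addr0; case: b => /=; ring.
Qed.

Lemma slack_ge0 (p : pt R N) i : in_box p -> 0 <= slack_x p i /\ 0 <= slack_y p i.
Proof.
move=> hbox; have [/andP[hx1 hx2] /andP[hy1 hy2]] := hbox i.
by rewrite /slack_x /slack_y !le_min !subr_ge0 hx1 hx2 hy1 hy2.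
Qed.

Lemma coord_move_pair_axis (p : pt R N) j k bj bk ej ek : in_box p -> j != k ->
  `|ej| <= slack p j bj -> `|ek| <= slack p k bk ->
  let e := shift (coord_move j bj ej) (coord_move k bk ek) in
  forall l, [/\ e.1 l * e.2 l = 0, `|e.1 l| <= slack_x p l & `|e.2 l| <= slack_y p l].
Proof.
move=> hbox jk hj hk e l; rewrite /e {e} /=.
have [->|lj] := eqVneq l j.
  have [sx sy] := slack_ge0 j hbox.
  rewrite (negbTE jk) !andbF !andbT !addr0.
  by move: hj; case: bj => /= hj; rewrite ?normr0 ?mulr0 ?mul0r; split.
have [->|lk] := eqVneq l k.
  have [sx sy] := slack_ge0 k hbox.
  rewrite !andbF !andbT !add0r.
  by move: hk; case: bk => /= hk; rewrite ?normr0 ?mulr0 ?mul0r; split.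
have [sx sy] := slack_ge0 l hbox.
by rewrite !andbF !addr0 normr0 mulr0; split.
Qed.

Lemma extreme_Sa_two_coord_moves (p : pt R N) j k bj bk ej ek :
  extreme_point S p -> j != k ->
  `|ej| <= slack p j bj -> `|ek| <= slack p k bk ->
  a j * (if bj then p.2 j else p.1 j) * ej + a k * (if bk then p.2 k else p.1 k) * ek = 0 ->
  ej = 0 /\ ek = 0.
Proof.
move=> hext jk hj hk hdiff; have [[_ hbox] _] := hext.
have := extreme_Sa_axis_shift hext (coord_move_pair_axis hbox jk hj hk).
rewrite constraint_diff_shift !constraint_diff_coord_move => /(_ hdiff) he.
have kj : (k == j) = false by rewrite eq_sym (negbTE jk).
move: (he j) (he k) => {he hj hk hdiff}.
rewrite /= (negbTE jk) kj !eqxx !andbF !andbT !addr0 !add0r.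
by case: bj; case: bk => /= -[h1 h2] [h3 h4].
Qed.

Definition vertexb (p : pt R N) (i : 'I_N) : bool :=
  ((p.1 i == xl i) || (p.1 i == xu i)) && ((p.2 i == yl i) || (p.2 i == yu i)).

Lemma at_vertexP (p : pt R N) i : reflect (at_vertex xl xu yl yu p i) (vertexb p i).
Proof.
apply: (iffP andP) => -[hx hy]; split.
- by case/orP: hx => /eqP; [left | right].
- by case/orP: hy => /eqP; [left | right].
- by case: hx => ->; rewrite eqxx ?orbT.
- by case: hy => ->; rewrite eqxx ?orbT.
Qed.

Lemma slack_gt0_off_vertex (p : pt R N) i : in_box p -> ~~ vertexb p i ->
  exists b, 0 < slack p i b.
Proof.
move=> hbox; have [/andP[hx1 hx2] /andP[hy1 hy2]] := hbox i.
rewrite /vertexb negb_and !negb_or => /orP[] /andP[h1 h2].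
- by exists true; rewrite /= lt_min !subr_gt0 !lt_def hx1 hx2 h1 eq_sym h2.
- by exists false; rewrite /= lt_min !subr_gt0 !lt_def hy1 hy2 h1 eq_sym h2.
Qed.

Lemma extreme_Sa_off_vertex_unique (p : pt R N) j k : extreme_point S p ->
  ~~ vertexb p j -> ~~ vertexb p k -> j = k.
Proof.
move=> hext offj offk; apply/eqP; apply: contraT => jk.
have [[_ hbox] _] := hext.
have [bj slack_j] := slack_gt0_off_vertex hbox offj.
have [bk slack_k] := slack_gt0_off_vertex hbox offk.
have [ej [ek [hej hek hdiff ne0]]] := small_nonzero_solution
  (a j * (if bj then p.2 j else p.1 j)) (a k * (if bk then p.2 k else p.1 k))
  slack_j slack_k.
have [ej0 ek0] := extreme_Sa_two_coord_moves hext jk hej hek hdiff.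
by case: ne0; rewrite ?ej0 ?ek0 eqxx.
Qed.

Lemma Sa_solve_at (p : pt R N) k : S p -> a k != 0 ->
  p.1 k * p.2 k = - (a k)^-1 * \sum_(i < N | i != k) a i * p.1 i * p.2 i.
Proof.
case; rewrite (bigD1 k) //= => /eqP; rewrite addrC addr_eq0 => /eqP -> _ ak0.
by field.
Qed.

End ExtremePointsOfSa.

Theorem corollary2 (R : realFieldType) (N : nat) (hN : (0 < N)%N)
  (a xl xu yl yu : 'I_N -> R)
  (ha : forall i, a i != 0)
  (hx : forall i, xl i < xu i) (hy : forall i, yl i < yu i)
  (p : pt R N) :
  extreme_point (Sa a xl xu yl yu) p ->
  D0 a xl xu yl yu p \/ exists k : 'I_N, Dk a xl xu yl yu k p.
Proof.
move=> hext; have [hSp _] := hext.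
case: (pickP (fun i => ~~ vertexb xl xu yl yu p i)) => [k offk | on_vertex].
- right; exists k; split=> //; split; last exact: Sa_solve_at hSp (ha k).
  move=> i ik; apply/at_vertexP; apply: contraNT ik => offi.
  by apply/eqP; exact: extreme_Sa_off_vertex_unique hext offi offk.
- by left; split=> // i; apply/at_vertexP; apply/negPn; rewrite on_vertex.
Qed.
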